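(* Let $X$ be a metric space, $U\subset X$, and $\varepsilon>0$. Let $\xi\colon U\to\ell^1(U)$ be a normed, locally supported map with $\varepsilon$-variation, and let $R\in\mathbb{N}$. Then there exists a locally supported map $\bar\xi\colon X\to\ell^1(X)$ such that (1) $\|\bar\xi_x\|_1=0$ for all $x\in X$ with $d(x,U)\ge R$; (2) $\bar\xi_x=\xi_x$ for all $x\in U$ (viewing $\ell^1(U)\subset\ell^1(X)$); (3) $\bar\xi$ has $\left((2R+1)\varepsilon+\frac1R\right)$-variation.
   Context: $\ell^1(Z)$ is the $\ell^1$-space of the underlying set of a metric space $Z$, and $\xi_x$ denotes the value of $\xi$ at $x$. A map $\xi\colon Z\to\ell^1(Z)$ has $\varepsilon$-variation if for each $k\in\mathbb{N}$ and all $x_1,x_2\in Z$ with $d(x_1,x_2)\le k$ one has $\|\xi_{x_1}-\xi_{x_2}\|_1\le k\varepsilon$. It is normed if $\|\xi_x\|_1=1$ for all $x$; it is $S$-locally supported if $\operatorname{supp}(\xi_x)\subset\bar B(x,S)$ for all $x$, and locally supported if it is $S$-locally supported for some $S>0$. *)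

From HB Require Import structures.
From mathcomp Require Import all_boot all_order all_algebra.
From mathcomp Require Import all_classical all_reals all_analysis.
Set Implicit Arguments. Unset Strict Implicit. Unset Printing Implicit Defensive.
Import Order.TTheory GRing.Theory Num.Theory.
Local Open Scope classical_set_scope.
Local Open Scope ring_scope.

Definition is_metric (R : realType) (X : choiceType) (d : X -> X -> R) : Prop :=
  (forall x y, 0 <= d x y) /\
  (forall x y, d x y = 0 <-> x = y) /\
  (forall x y, d x y = d y x) /\
  (forall x y z, d x z <= d x y + d y z).

Definition l1norm (R : realType) (X : choiceType) (f : X -> R) : \bar R :=
  \esum_(y in [set: X]) (`|f y|)%:E.

Definition in_l1 (R : realType) (X : choiceType) (f : X -> R) : Prop :=
  (l1norm f < +oo)%E.

Definition has_variation (R : realType) (X : choiceType) (d : X -> X -> R)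
  (D : set X) (xi : X -> X -> R) (eps : R) : Prop :=
  forall (k : nat) (x1 x2 : X), D x1 -> D x2 -> d x1 x2 <= k%:R ->
    (l1norm (fun y => (xi x1 y - xi x2 y)%R) <= (k%:R * eps)%:E)%E.

Definition normed_on (R : realType) (X : choiceType) (D : set X)
  (xi : X -> X -> R) : Prop :=
  forall x, D x -> l1norm (xi x) = 1%E.

Definition loc_supported_S (R : realType) (X : choiceType) (d : X -> X -> R)
  (D : set X) (xi : X -> X -> R) (S : R) : Prop :=
  forall x y, D x -> xi x y != 0 -> d x y <= S.

Definition loc_supported (R : realType) (X : choiceType) (d : X -> X -> R)
  (D : set X) (xi : X -> X -> R) : Prop :=
  exists2 S, 0 < S & loc_supported_S d D xi S.

(* d(x, U) >= r, with d(x,U) = inf_{u in U} d(x,u) (= +oo if U is empty) *)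
Definition dist_set_ge (R : realType) (X : choiceType) (d : X -> X -> R)
  (x : X) (U : set X) (r : R) : Prop :=
  forall u, U u -> r <= d x u.

From HB Require Import structures.
From mathcomp Require Import all_boot all_order all_algebra.
From mathcomp Require Import all_classical all_reals all_analysis.
From mathcomp Require Import ring lra.
Import Order.TTheory GRing.Theory Num.Theory.
Local Open Scope classical_set_scope.
Local Open Scope ring_scope.

Set Implicit Arguments. Unset Strict Implicit. Unset Printing Implicit Defensive.

(* Put [xib x := a x * xi (p x)], where [a x := max(0, 1 - d(x,U)/r)] is a
   1/r-Lipschitz cutoff, equal to 1 on U and to 0 at distance >= r from U, and
   [p x] is a point of U at distance < r from x (with [p x = x] on U), which
   exists whenever [a x > 0].  For d(x1,x2) <= k, writing
   [a1 xi1 - a2 xi2 = (a1 - a2) xi1 + a2 (xi1 - xi2)], the first term has norm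
   at most k/r, and since d(p x1, p x2) <= 2r + k the second has norm at most
   (2r + k) eps <= k (2r + 1) eps. *)

Section L1Norm.
Variables (R : realType) (X : choiceType).
Implicit Types (f g : X -> R).

Lemma esumZl_le (I : set X) (c : R) (a : X -> \bar R) : 0 <= c ->
  (forall y, (0 <= a y)%E) ->
  (\esum_(y in I) (c%:E * a y) <= c%:E * \esum_(y in I) a y)%E.
Proof.
move=> c0 a0; apply: ge_ereal_sup => _ [F [finF FI] <-].
rewrite -ge0_mule_fsumr //; apply: lee_wpmul2l; first by rewrite lee_fin.
by apply: ereal_sup_ubound; exists F.
Qed.

Lemma l1norm0 f : (forall y, f y = 0) -> l1norm f = 0%E.
Proof. by move=> f0; apply: esum1 => y _; rewrite f0 normr0. Qed.

Lemma l1normZ_le (c : R) f :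
  (l1norm (fun y => c * f y)%R <= (`|c|%R)%:E * l1norm f)%E.
Proof.
rewrite /l1norm (eq_esum (b := fun y => ((`|c|%R)%:E * (`|f y|%R)%:E)%E)).
  by apply: esumZl_le => // y; rewrite lee_fin.
by move=> y _; rewrite normrM EFinM.
Qed.

Lemma l1normD_le f g :
  (l1norm (fun y => f y + g y)%R <= l1norm f + l1norm g)%E.
Proof.
rewrite /l1norm -esumD => [|y _|y _]; rewrite ?lee_fin //.
by apply: le_esum => y _; rewrite -EFinD lee_fin ler_normD.
Qed.

Lemma l1norm_distC f g :
  l1norm (fun y => f y - g y) = l1norm (fun y => g y - f y).
Proof. by apply: eq_esum => y _; rewrite distrC. Qed.

Lemma l1normB_scale_le (a1 a2 : R) f1 f2 : 0 <= a2 ->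
  (l1norm (fun y => a1 * f1 y - a2 * f2 y)%R <=
   (`|a1 - a2|%R)%:E * l1norm f1 + a2%:E * l1norm (fun y => f1 y - f2 y)%R)%E.
Proof.
move=> a2_ge0.
have -> : (fun y => a1 * f1 y - a2 * f2 y) =
    (fun y => (a1 - a2) * f1 y + a2 * (f1 y - f2 y)).
  by apply: funext => y; rewrite mulrBl mulrBr addrA subrK.
apply: le_trans (l1normD_le _ _) _; apply: leeD; first exact: l1normZ_le.
by apply: le_trans (l1normZ_le _ _) _; rewrite ger0_norm.
Qed.

End L1Norm.

Section Metric.
Variables (R : realType) (X : choiceType) (d : X -> X -> R).
Hypothesis hd : is_metric d.

Lemma metric_ge0 x y : 0 <= d x y. Proof. by case: hd. Qed.

Lemma metric_eq0 x y : d x y = 0 -> x = y.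
Proof. by case: hd => _ [/(_ x y) []]. Qed.

Lemma metricxx x : d x x = 0. Proof. by case: hd => _ [/(_ x x) [_ ->]]. Qed.

Lemma metricC x y : d x y = d y x. Proof. by case: hd => _ [_ []]. Qed.

Lemma metric_triangle x y z : d x z <= d x y + d y z.
Proof. by case: hd => _ [_ []]. Qed.

End Metric.

Section DistanceToSet.
Variables (R : realType) (X : choiceType) (d : X -> X -> R).
Hypothesis hd : is_metric d.
Variable U : set X.
Hypothesis U0 : U !=set0.

Definition dist_to x := inf [set d x u | u in U].

Let dist_image_neq0 x : [set d x u | u in U] !=set0.
Proof. by case: U0 => u Uu; exists (d x u), u. Qed.

Lemma dist_to_ge x t : dist_set_ge d x U t -> t <= dist_to x.
Proof. by move=> xt; apply: lb_le_inf => // _ [u Uu <-]; exact: xt. Qed.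

Lemma dist_to_ge0 x : 0 <= dist_to x.
Proof. by apply: dist_to_ge => u _; exact: metric_ge0. Qed.

Lemma dist_to_le x u : U u -> dist_to x <= d x u.
Proof.
move=> Uu; apply: ge_inf; last by exists u.
by exists 0 => _ [v _ <-]; exact: metric_ge0.
Qed.

Lemma dist_to_mem x : U x -> dist_to x = 0.
Proof.
by move=> Ux; apply/le_anti; rewrite dist_to_ge0 -(metricxx hd x) dist_to_le.
Qed.

Lemma dist_to_lt x t : dist_to x < t -> exists2 u, U u & d x u < t.
Proof. by move=> /(inf_lt (dist_image_neq0 x)) [_ [u Uu <-]]; exists u. Qed.

Lemma dist_to_le_add x1 x2 : dist_to x1 <= dist_to x2 + d x1 x2.
Proof.
rewrite -lerBlDr; apply: lb_le_inf => // _ [u Uu <-].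
by rewrite lerBlDr (le_trans (dist_to_le _ Uu)) // addrC metric_triangle.
Qed.

Lemma dist_to_lip x1 x2 : `|dist_to x1 - dist_to x2| <= d x1 x2.
Proof.
have := dist_to_le_add x1 x2; have := dist_to_le_add x2 x1.
rewrite (metricC hd x2) ler_norml; lra.
Qed.

End DistanceToSet.

Section Ramp.
Variables (R : realFieldType) (r : R).
Hypothesis r_gt0 : 0 < r.

Definition ramp t := Num.max 0 (1 - t / r).

Lemma ramp_ge0 t : 0 <= ramp t.
Proof. by rewrite le_max lexx. Qed.

Lemma ramp_le1 t : 0 <= t -> ramp t <= 1.
Proof. by move=> t0; rewrite ge_max ler01 lerBlDr lerDl divr_ge0 // ltW. Qed.

Lemma ramp0 : ramp 0 = 1.
Proof. by rewrite /ramp mul0r subr0; apply/max_idPr. Qed.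

Lemma ramp_eq0 t : r <= t -> ramp t = 0.
Proof. by move=> rt; apply/max_idPl; rewrite subr_le0 ler_pdivlMr // mul1r. Qed.

Lemma ramp_gt0 t : 0 < ramp t -> t < r.
Proof. by rewrite lt_max ltxx /= subr_gt0 ltr_pdivrMr // mul1r. Qed.

Lemma ramp_lip s t : `|ramp s - ramp t| <= `|s - t| / r.
Proof.
have -> : `|s - t| / r = `|(1 - s / r) - (1 - t / r)|.
  have -> : (1 - s / r) - (1 - t / r) = (t - s) / r by ring.
  by rewrite normrM distrC [`|r^-1|]gtr0_norm ?invr_gt0.
rewrite /ramp; move: (1 - s / r) (1 - t / r) => a b.
have ab := ler_norm (a - b); have ba := ler_norm (b - a); rewrite distrC in ba.
rewrite ler_norml; case: (leP 0 a) => a0; case: (leP 0 b) => b0;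
  rewrite ?(max_idPr a0) ?(max_idPl (ltW a0));
  rewrite ?(max_idPr b0) ?(max_idPl (ltW b0));
  apply/andP; split; lra.
Qed.

End Ramp.

Section CutoffAnchor.
Variables (R : realType) (X : choiceType) (d : X -> X -> R).
Hypothesis hd : is_metric d.
Variables (U : set X) (r : R).
Hypotheses (U0 : U !=set0) (r_gt0 : 0 < r).

Definition cutoff x := ramp r (dist_to d U x).

Definition anchor x :=
  if `[< U x >] then x else xget x [set u | U u /\ d x u < r].

Lemma cutoff_ge0 x : 0 <= cutoff x.
Proof. exact: ramp_ge0. Qed.

Lemma cutoff_le1 x : cutoff x <= 1.
Proof. exact/ramp_le1/dist_to_ge0. Qed.

Lemma cutoff_mem x : U x -> cutoff x = 1.
Proof. by move=> Ux; rewrite /cutoff dist_to_mem // ramp0. Qed.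

Lemma cutoff_far x : dist_set_ge d x U r -> cutoff x = 0.
Proof. by move=> xr; apply/ramp_eq0/dist_to_ge. Qed.

Lemma cutoff_lip x1 x2 : `|cutoff x1 - cutoff x2| <= d x1 x2 / r.
Proof.
apply: le_trans (ramp_lip r_gt0 _ _) _.
by rewrite ler_pM2r ?invr_gt0 // dist_to_lip.
Qed.

Lemma anchor_mem x : U x -> anchor x = x.
Proof. by rewrite /anchor; case: asboolP. Qed.

Lemma cutoff_gt0_anchor x : 0 < cutoff x -> U (anchor x) /\ d x (anchor x) < r.
Proof.
move=> /(ramp_gt0 r_gt0) /dist_to_lt [//|u Uu xu].
rewrite /anchor; case: asboolP => [Ux|_]; first by rewrite metricxx.
by apply: (xgetPex x (P := [set u | U u /\ d x u < r])); exists u.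
Qed.

Lemma anchor_dist x1 x2 : 0 < cutoff x1 -> 0 < cutoff x2 ->
  d (anchor x1) (anchor x2) <= r + d x1 x2 + r.
Proof.
move=> /cutoff_gt0_anchor [_ h1] /cutoff_gt0_anchor [_ h2].
have := metric_triangle hd (anchor x1) x1 (anchor x2).
have := metric_triangle hd x1 x2 (anchor x2).
rewrite (metricC hd (anchor x1) x1); lra.
Qed.

End CutoffAnchor.

Lemma variation_bound_ge0 (R : realFieldType) (eps : R) (n : nat) :
  0 < eps -> 0 <= (2 * n%:R + 1) * eps + n%:R^-1.
Proof.
move=> eps_gt0; have n_ge0 := ler0n R n.
by rewrite addr_ge0 ?invr_ge0 // mulr_ge0 ?ltW //; lra.
Qed.

Section Extension.
Variables (R : realType) (X : choiceType) (d : X -> X -> R).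
Hypothesis hd : is_metric d.
Variables (U : set X) (eps : R) (xi : X -> X -> R) (n : nat).
Hypotheses (U0 : U !=set0) (eps_gt0 : 0 < eps) (n_gt0 : (0 < n)%N).
Hypotheses (xi_normed : normed_on U xi) (xi_loc : loc_supported d U xi)
  (xi_var : has_variation d U xi eps).

Local Notation r := (n%:R : R).

Let r_gt0 : 0 < r. Proof. by rewrite ltr0n. Qed.

Definition extension x y := cutoff d U r x * xi (anchor d U r x) y.

Let anchor_near x : 0 < cutoff d U r x ->
  U (anchor d U r x) /\ d x (anchor d U r x) < r.
Proof. exact: cutoff_gt0_anchor. Qed.

Let cutoff_le0 x : cutoff d U r x <= 0 -> cutoff d U r x = 0.
Proof. by move=> a_le0; apply/le_anti; rewrite a_le0 cutoff_ge0. Qed.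

Lemma extension_l1 x : in_l1 (extension x).
Proof.
apply: le_lt_trans (l1normZ_le _ _) _.
have [/anchor_near[Ux _]|/cutoff_le0 ->] := ltP 0 (cutoff d U r x).
  by rewrite xi_normed // mule1 ltry.
by rewrite normr0 mul0e ltry.
Qed.

Lemma extension_loc : loc_supported d [set: X] extension.
Proof.
have [S S_gt0 xiS] := xi_loc.
exists (r + S) => [|x y _]; first by rewrite addr_gt0.
rewrite mulf_eq0 negb_or => /andP[a_neq0 xi_neq0].
have [Ux xr] : U (anchor d U r x) /\ d x (anchor d U r x) < r.
  by apply: anchor_near; rewrite lt_def a_neq0 cutoff_ge0.
have := xiS _ _ Ux xi_neq0; have := metric_triangle hd x (anchor d U r x) y.
lra.
Qed.

Lemma extension_far x : dist_set_ge d x U r -> l1norm (extension x) = 0%E.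
Proof.
move=> /(cutoff_far U0 r_gt0) a0.
by apply: l1norm0 => y; rewrite /extension a0 mul0r.
Qed.

Lemma extension_mem x : U x -> extension x = xi x.
Proof.
move=> Ux; apply: funext => y.
by rewrite /extension cutoff_mem // anchor_mem // mul1r.
Qed.

Lemma cutoff_anchor_variation (k : nat) x1 x2 : (0 < k)%N -> d x1 x2 <= k%:R ->
  0 < cutoff d U r x1 ->
  ((cutoff d U r x2)%:E *
     l1norm (fun y => xi (anchor d U r x1) y - xi (anchor d U r x2) y)%R
   <= (k%:R * (2 * r + 1) * eps)%:E)%E.
Proof.
move=> k_gt0 x12 a1_gt0.
have [a2_gt0|/cutoff_le0 ->] := ltP 0 (cutoff d U r x2); last first.
  rewrite mul0e lee_fin; apply: mulr_ge0 (ltW eps_gt0).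
  by apply: mulr_ge0; [exact: ler0n | have := r_gt0; lra].
have [[U1 _] [U2 _]] := (anchor_near a1_gt0, anchor_near a2_gt0).
have a12 : d (anchor d U r x1) (anchor d U r x2) <= (2 * n + k)%N%:R.
  by rewrite natrD natrM; have := anchor_dist hd U0 r_gt0 a1_gt0 a2_gt0; lra.
apply: le_trans (lee_wpmul2l _ (xi_var U1 U2 a12)) _.
  by rewrite lee_fin cutoff_ge0.
rewrite -EFinM lee_fin.
apply: le_trans (ler_piMl _ (cutoff_le1 hd U0 r_gt0 _)) _.
  by apply: mulr_ge0 (ltW eps_gt0); exact: ler0n.
rewrite ler_pM2r // (_ : k%:R * (2 * r + 1) = (k * (2 * n + 1))%N%:R).
  by rewrite ler_nat mulnDr muln1 leq_add2r leq_pmull.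
by rewrite natrM natrD natrM.
Qed.

Lemma extension_variation_cutoff_gt0 (k : nat) x1 x2 :
  (0 < k)%N -> d x1 x2 <= k%:R -> 0 < cutoff d U r x1 ->
  (l1norm (fun y => extension x1 y - extension x2 y)%R
   <= (k%:R * ((2 * r + 1) * eps + r^-1))%:E)%E.
Proof.
move=> k_gt0 x12 a1_gt0; have [U1 _] := anchor_near a1_gt0.
apply: le_trans (l1normB_scale_le _ _ _ (cutoff_ge0 _ _ _ x2)) _.
rewrite xi_normed // mule1.
have -> : k%:R * ((2 * r + 1) * eps + r^-1) =
    k%:R / r + k%:R * (2 * r + 1) * eps by ring.
rewrite EFinD; apply: leeD; last exact: cutoff_anchor_variation.
rewrite lee_fin; apply: le_trans (cutoff_lip hd U0 r_gt0 _ _) _.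
by rewrite ler_pM2r ?invr_gt0.
Qed.

Lemma extension_variation :
  has_variation d [set: X] extension ((2 * r + 1) * eps + r^-1).
Proof.
move=> [|k] x1 x2 _ _ x12.
  have -> : x2 = x1.
    by apply/esym/(metric_eq0 hd)/le_anti; rewrite metric_ge0 // andbT.
  by rewrite mul0r l1norm0 // => y; rewrite subrr.
have [a1_gt0|/cutoff_le0 a1] := ltP 0 (cutoff d U r x1).
  exact: extension_variation_cutoff_gt0.
have [a2_gt0|/cutoff_le0 a2] := ltP 0 (cutoff d U r x2).
  rewrite l1norm_distC; apply: extension_variation_cutoff_gt0 => //.
  by rewrite metricC.
rewrite l1norm0 ?lee_fin ?mulr_ge0 ?variation_bound_ge0 //.
by move=> y; rewrite /extension a1 a2 !mul0r subrr.
Qed.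

End Extension.

Theorem lemma5p4 (R : realType) (X : choiceType) (d : X -> X -> R)
  (hd : is_metric d) (U : set X) (eps : R) (heps : 0 < eps)
  (xi : X -> X -> R)
  (xi_l1 : forall x, U x -> in_l1 (xi x))
  (xi_U : forall x y, U x -> xi x y != 0 -> U y)
  (xi_normed : normed_on U xi)
  (xi_loc : loc_supported d U xi)
  (xi_var : has_variation d U xi eps)
  (Rn : nat) (hRn : (0 < Rn)%N) :
  exists xib : X -> X -> R,
    [/\ forall x, in_l1 (xib x),
        loc_supported d [set: X] xib,
        forall x, dist_set_ge d x U Rn%:R -> l1norm (xib x) = 0%E,
        forall x, U x -> xib x = xi x &
        has_variation d [set: X] xib ((2 * Rn%:R + 1) * eps + Rn%:R^-1)].
Proof.
have [U0|U_empty] := pselect (U !=set0).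
  exists (extension d U xi Rn); split.
  - exact: extension_l1.
  - exact: extension_loc.
  - exact: extension_far.
  - exact: extension_mem.
  - exact: extension_variation.
exists (fun _ _ => 0); split.
- by move=> x; rewrite /in_l1 l1norm0 ?ltry.
- by exists 1 => // x y _; rewrite eqxx.
- by move=> x _; rewrite l1norm0.
- by move=> x Ux; case: U_empty; exists x.
- move=> k x1 x2 _ _ _; rewrite l1norm0 ?subrr //.
  by rewrite lee_fin mulr_ge0 ?variation_bound_ge0.
Qed.
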